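(* Let $n\ge 3$, let $C_n$ be the cycle on $n$ vertices, and let $v\in V(C_n)$. Then $$TDV(v)=\begin{cases}2 & \text{if } n\equiv 0 \pmod 4,\\ \left\lfloor \frac n2\right\rfloor+1 & \text{if } n\equiv 1,3 \pmod 4,\\ \frac n2\cdot\frac{n+2}{4} & \text{if } n\equiv 2 \pmod 4.\end{cases}$$
   Context: A set $D \subseteq V(G)$ is a total dominating set of a graph $G$ if every vertex of $G$ has a neighbor in $D$. $\gamma_t(G)$ is the minimum cardinality of a total dominating set; a minimum one is a $\gamma_t(G)$-set. $TDV(v)$ is the number of $\gamma_t(C_n)$-sets containing $v$. *)

From mathcomp Require Import all_boot.
Set Implicit Arguments. Unset Strict Implicit. Unset Printing Implicit Defensive.

Definition cycle_adj (n : nat) (x y : 'I_n) : bool :=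
  (val y == (val x).+1 %% n) || (val x == (val y).+1 %% n).

Definition total_dom (n : nat) (D : {set 'I_n}) : bool :=
  [forall x : 'I_n, [exists y : 'I_n, (y \in D) && cycle_adj x y]].

Definition gamma_t_set (n : nat) (D : {set 'I_n}) : bool :=
  total_dom D && [forall D' : {set 'I_n}, total_dom D' ==> (#|D| <= #|D'|)].

Definition TDV (n : nat) (v : 'I_n) : nat :=
  #|[set D : {set 'I_n} | gamma_t_set D && (v \in D)]|.

From mathcomp Require Import all_boot zify.
Set Implicit Arguments. Unset Strict Implicit. Unset Printing Implicit Defensive.

(* Read a set D of vertices of C_N as the N-periodic boolean sequence
   k |-> [k mod N \in D]; D is totally dominating iff k or k+2 is in D for every k.
   Along the chains j |-> 2j + c (one chain of period N if N is odd, two chains of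
   period m = N/2 if N = 2m) this says that no two consecutive terms are false, so a
   chain of period p with t true terms and d "doubles" (two consecutive true terms)
   satisfies 2t = p + d.  Hence a gamma_t-set has no double on a chain of even period,
   which then alternates, and exactly one double on a chain of odd period, which is
   then an alternating pattern fixed by the position of its double.  This bounds the
   number of gamma_t-sets through a given vertex by 2, (N+1)/2 or (m+1)/2 * m, while
   rotations and interleavings of {x | x mod 4 < 2} provide so many gamma_t-sets that
   double counting the incidences (set, vertex) forces equality at every vertex. *)

Section PeriodicSequence.
Variables (m : nat) (h : nat -> bool).
Hypothesis h_per : forall j, h (j + m) = h j.

Lemma periodic_addMn x k : h (x + k * m) = h x.
Proof.
elim: k => [|k IH]; first by rewrite addn0.
by rewrite mulSn (_ : x + (m + k * m) = x + k * m + m) ?h_per //; lia.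
Qed.

Lemma periodic_mod x : h (x %% m) = h x.
Proof. by rewrite {2}(divn_eq x m) addnC periodic_addMn. Qed.

Lemma periodic_eqmod a b : a = b %[mod m] -> h a = h b.
Proof. by move=> eq_ab; rewrite -periodic_mod eq_ab periodic_mod. Qed.

Lemma sum_periodic_shift c : \sum_(i < m) (h (i + c) : nat) = \sum_(i < m) (h i : nat).
Proof.
elim: c => [|c IH]; first by under eq_bigr do rewrite addn0.
rewrite -IH; set F := fun i => (h (i + c) : nat).
have := @big_nat_recr nat 0 addn m 0 F (leq0n m).
rewrite (@big_nat_recl nat 0 addn m 0 F (leq0n m)) /F add0n [m + c]addnC h_per !big_mkord.
by rewrite addnC => /addIn <-; apply: eq_bigr => i _; rewrite addSnnS.
Qed.

Section Covering.
Hypothesis h_cover : forall j, h j || h j.+1.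

Lemma covering_count :
  (\sum_(j < m) (h j : nat)) * 2 = m + \sum_(j < m) (h j && h j.+1 : nat).
Proof.
have pair_count : \sum_(j < m) (h j + h j.+1 : nat) = \sum_(j < m) (1 + (h j && h j.+1) : nat).
  by apply: eq_bigr => j _; have := h_cover j; case: (h j); case: (h j.+1).
rewrite !big_split /= sum_nat_const card_ord muln1 in pair_count.
rewrite -pair_count muln2 -addnn; congr (_ + _).
by rewrite -(sum_periodic_shift 1); apply: eq_bigr => i _; rewrite addn1.
Qed.

Lemma covering_alternate : 0 < m -> \sum_(j < m) (h j && h j.+1 : nat) = 0 ->
  forall j, h j = h 0 (+) odd j.
Proof.
move=> m_gt0 /eqP; rewrite sum_nat_eq0 => /forallP no_double.
have flip j : h j.+1 = ~~ h j.
  have := no_double (Ordinal (ltn_pmod j m_gt0)); rewrite /= periodic_mod.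
  rewrite (@periodic_eqmod (j %% m).+1 j.+1); last by rewrite -addn1 modnDml addn1.
  by have := h_cover j; case: (h j); case: (h j.+1).
by elim=> [|j IH]; rewrite ?addbF // flip IH /= addbN.
Qed.

Section SingleDouble.
Hypothesis one_double : \sum_(j < m) (h j && h j.+1 : nat) = 1.

Definition first_double : nat :=
  if [pick j : 'I_m | h j && h j.+1] is Some j then val j else 0.

Definition double_phase : nat := m - first_double.+1.

Lemma first_doubleP : [/\ first_double < m, h first_double && h first_double.+1 &
  forall j, j < m -> h j && h j.+1 -> j = first_double].
Proof.
rewrite /first_double; case: pickP => [j0 dbl_j0 | no_double]; last first.
  by move: one_double; rewrite big1 // => j _; rewrite no_double.
split=> [|//|j lt_jm dbl_j]; first exact: ltn_ord.
apply/eqP/negPn/negP => ne_j.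
move: one_double; rewrite (bigD1 j0) // (bigD1 (Ordinal lt_jm)) /=; last first.
  by apply/eqP => /(congr1 val) /= eq_j; rewrite eq_j eqxx in ne_j.
by rewrite dbl_j0 dbl_j; lia.
Qed.

Lemma double_mod j : h j && h j.+1 -> j %% m = first_double.
Proof.
have [lt_m _ uniq_double] := first_doubleP.
move=> dbl_j; apply: uniq_double; first by apply: ltn_pmod; lia.
rewrite periodic_mod (@periodic_eqmod (j %% m).+1 j.+1) //.
by rewrite -addn1 modnDml addn1.
Qed.

Lemma double_phase_lt : double_phase < m.
Proof. by have [lt_m _ _] := first_doubleP; rewrite /double_phase; lia. Qed.

Lemma single_double_shape y : h y = ~~ odd ((y + double_phase) %% m).
Proof.
have [lt_m dbl uniq_double] := first_doubleP.
set j0 := first_double in lt_m dbl uniq_double *.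
have after_double i : i < m -> h (j0.+1 + i) = ~~ odd i.
  elim: i => [|i IH] lt_im; first by rewrite addn0; case/andP: dbl.
  have not_double : ~~ (h (j0.+1 + i) && h (j0.+1 + i).+1).
    apply/negP => /double_mod eq_j0.
    have /eqP : j0 + i.+1 = j0 + 0 %[mod m] by rewrite addn0 (modn_small lt_m) -addSnnS eq_j0.
    by rewrite eqn_modDl mod0n modn_small.
  have := h_cover (j0.+1 + i); move: not_double.
  by rewrite IH 1?addnS /=; [case: (h _); case: (odd i) | lia].
rewrite -after_double; last by apply: ltn_pmod; lia.
apply: periodic_eqmod; rewrite modnDmr /double_phase.
by rewrite (_ : j0.+1 + (y + (m - j0.+1)) = y + m) ?modnDr //; lia.
Qed.

Lemma double_shift_inj a b : a < m -> b < m ->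
  (forall j, h (j + a) = h (j + b)) -> a = b.
Proof.
have [_ dbl _] := first_doubleP.
move=> lt_am lt_bm eq_shift; set j := first_double + m - a.
have dbl_a : h (j + a) && h (j + a).+1.
  by rewrite (_ : j + a = first_double + m) ?h_per -?addSn ?h_per //; lia.
have dbl_b : h (j + b) && h (j + b).+1 by rewrite -eq_shift -addSn -eq_shift.
have /eqP : j + a = j + b %[mod m] by rewrite !double_mod.
by rewrite eqn_modDl !modn_small // => /eqP.
Qed.

End SingleDouble.
End Covering.
End PeriodicSequence.

Lemma card_ord_pred k (P : pred nat) : #|[set i : 'I_k | P i]| = \sum_(i < k) (P i : nat).
Proof.
rewrite -sum1_card big_mkcond /=.
by apply: eq_bigr => i _; rewrite inE; case: (P i).
Qed.

Lemma card_ord_not_odd k : #|[set i : 'I_k | ~~ odd i]| = k.+1 %/ 2.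
Proof.
rewrite (card_ord_pred k (fun i => ~~ odd i)); elim: k => [|k IH]; first by rewrite big_ord0.
by rewrite big_ord_recr /= IH; have := modn2 k; case: (odd k) => /= ?; lia.
Qed.

Lemma card_ord_mod4_lt2 k :
  #|[set i : 'I_k | i %% 4 < 2]| = 2 * (k %/ 4) + minn (k %% 4) 2.
Proof.
rewrite (card_ord_pred k (fun i => i %% 4 < 2)); elim: k => [|k IH]; first by rewrite big_ord0.
by rewrite big_ord_recr /= IH; case: ltnP => /= ?; lia.
Qed.

Lemma sum_ord_even_odd k (f : nat -> nat) :
  \sum_(i < 2 * k) f i = \sum_(j < k) f (2 * j) + \sum_(j < k) f (2 * j + 1).
Proof.
elim: k => [|k IH]; first by rewrite !big_ord0.
rewrite (_ : 2 * k.+1 = (2 * k).+2) ?big_ord_recr //= ?IH; last by lia.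
by rewrite -addnA addnACA addn1.
Qed.

Lemma card_containing_eq (T : finType) (M : {set {set T}}) (c K : nat) :
  (forall D, D \in M -> #|D| = c) -> (forall v, #|[set D in M | v \in D]| <= K) ->
  #|T| * K <= #|M| * c -> forall v, #|[set D in M | v \in D]| = K.
Proof.
move=> card_M le_K le_total.
set f := fun v => #|[set D in M | v \in D]|.
have sum_f : \sum_v f v = #|M| * c.
  have f_sum v : f v = \sum_(D in M) (v \in D : nat).
    rewrite /f -sum1_card big_mkcond [RHS]big_mkcond /=.
    by apply: eq_bigr => D _; rewrite !inE; case: (D \in M); case: (v \in D).
  under eq_bigr do rewrite f_sum.
  rewrite exchange_big /= -sum_nat_const; apply: eq_bigr => D DM.
  rewrite -(card_M _ DM) -sum1_card [RHS]big_mkcond /=.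
  by apply: eq_bigr => v _; case: (v \in D).
have sum_deficit : \sum_v (K - f v) + \sum_v f v = #|T| * K.
  rewrite -big_split /= (eq_bigr (fun _ => K)); last by move=> v _; rewrite subnK ?le_K.
  by rewrite sum_nat_const mulnC.
have /eqP : \sum_v (K - f v) = 0 by move: sum_deficit; rewrite sum_f; lia.
rewrite sum_nat_eq0 => /forallP deficit0 v.
by have := deficit0 v; have := le_K v; rewrite /f; lia.
Qed.

Lemma gamma_t_setE (n : nat) (D0 : {set 'I_n}) (g : nat) :
  total_dom D0 -> #|D0| = g -> (forall D : {set 'I_n}, total_dom D -> g <= #|D|) ->
  forall D : {set 'I_n}, gamma_t_set D = total_dom D && (#|D| == g).
Proof.
move=> tds_D0 card_D0 lb D; rewrite /gamma_t_set; case tds_D: (total_dom D) => //=.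
apply/forallP/eqP => [/(_ D0)|card_D D'].
  by rewrite tds_D0 card_D0 /= => le_g; apply/eqP; rewrite eqn_leq le_g lb.
by apply/implyP => /lb; rewrite card_D.
Qed.

Lemma TDVE (n : nat) (v : 'I_n) :
  TDV v = #|[set D in [set D : {set 'I_n} | gamma_t_set D] | v \in D]|.
Proof. by apply: eq_card => D; rewrite !inE. Qed.

Section CycleSets.
Variable n : nat.
Local Notation N := n.+1.
Implicit Types D E : {set 'I_N}.

Definition cmem D k : bool := (inord (k %% N) : 'I_N) \in D.

Lemma cmem_periodic D j : cmem D (j + N) = cmem D j.
Proof. by rewrite /cmem modnDr. Qed.

Lemma cmem_eqmod D a b : a = b %[mod N] -> cmem D a = cmem D b.
Proof. by rewrite /cmem => ->. Qed.

Lemma cmem_ord D (x : 'I_N) : cmem D x = (x \in D).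
Proof. by rewrite /cmem modn_small // inord_val. Qed.

Lemma cmem_inj D E : (forall k, cmem D k = cmem E k) -> D = E.
Proof. by move=> eq_DE; apply/setP => x; rewrite -!cmem_ord. Qed.

Lemma card_cmem D : #|D| = \sum_(k < N) (cmem D k : nat).
Proof.
rewrite -sum1_card big_mkcond /=.
by apply: eq_bigr => x _; rewrite cmem_ord; case: (x \in D).
Qed.

Lemma total_domP D : reflect (forall k, cmem D k || cmem D k.+2) (total_dom D).
Proof.
apply: (iffP forallP) => [tds k | cover x].
  have /existsP [y /andP [yD adj]] := tds (inord (k.+1 %% N)).
  have cmem_y t : nat_of_ord y = t %% N -> cmem D t by rewrite /cmem => <-; rewrite inord_val.
  move: adj; rewrite /cycle_adj /= inordK ?ltn_pmod // => /orP [] /eqP eq_y.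
    by rewrite (cmem_y k.+2) ?orbT // eq_y -[(k.+1 %% N).+1]addn1 modnDml addn1.
  rewrite (cmem_y k) //; apply/eqP.
  by rewrite -(modn_small (ltn_ord y)) -(eqn_modDr 1) !addn1 -eq_y.
apply/existsP; have := cover (x + n); case/orP => [in_D | in_D].
  exists (inord ((x + n) %% N)); apply/andP; split=> //.
  rewrite /cycle_adj /= inordK ?ltn_pmod //.
  rewrite -[((x + n) %% N).+1]addn1 modnDml -addnA addn1 modnDr.
  by rewrite (modn_small (ltn_ord x)) eqxx orbT.
exists (inord ((x + n).+2 %% N)); apply/andP; split=> //.
rewrite /cycle_adj /= inordK ?ltn_pmod //.
by rewrite (_ : (x + n).+2 = x.+1 + N) ?modnDr ?eqxx //; lia.
Qed.

Definition crot (s : nat) D := [set x : 'I_N | cmem D (x + s)].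

Lemma cmem_rot s D k : cmem (crot s D) k = cmem D (k + s).
Proof. by rewrite {1}/cmem inE inordK ?ltn_pmod //; apply: cmem_eqmod; rewrite modnDml. Qed.

Lemma total_dom_rot s D : total_dom D -> total_dom (crot s D).
Proof. by move/total_domP=> cover; apply/total_domP => k; rewrite !cmem_rot !addSn. Qed.

Lemma card_rot s D : #|crot s D| = #|D|.
Proof.
rewrite !card_cmem; under eq_bigr do rewrite cmem_rot.
exact: (sum_periodic_shift (cmem_periodic D)).
Qed.

Lemma gamma_t_set_rot s D : gamma_t_set D -> gamma_t_set (crot s D).
Proof. by case/andP => /(total_dom_rot s) tds min; rewrite /gamma_t_set tds card_rot. Qed.

Definition interleave D E := [set x : 'I_N | if odd x then x \in E else x \in D].

Lemma cmem_interleave D E k : ~~ odd N ->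
  cmem (interleave D E) k = if odd k then cmem E k else cmem D k.
Proof. by move=> even_N; rewrite {1}/cmem inE inordK ?ltn_pmod // odd_mod // (negbTE even_N). Qed.

Lemma total_dom_interleave D E : ~~ odd N -> total_dom D -> total_dom E ->
  total_dom (interleave D E).
Proof.
move=> even_N /total_domP coverD /total_domP coverE; apply/total_domP => k.
by rewrite !cmem_interleave //= negbK; case: (odd k).
Qed.

Definition set1100 := [set x : 'I_N | x %% 4 < 2].

Lemma total_dom_set1100 : 2 <= n -> total_dom set1100.
Proof.
move=> n_ge2; apply/total_domP => k; rewrite /cmem !inE !inordK ?ltn_pmod //.
rewrite -[k.+2]addn2 -modnDml; have := ltn_pmod k (ltn0Sn n).
set t := k %% N; case: (ltnP (t + 2) N) => [lt_tN | le_Nt] lt_t.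
  by rewrite (modn_small lt_tN); lia.
rewrite (_ : t + 2 = (t + 2 - N) + N) ?modnDr ?(@modn_small (t + 2 - N)); lia.
Qed.

Lemma card_set1100 : #|set1100| = 2 * (N %/ 4) + minn (N %% 4) 2.
Proof. exact: card_ord_mod4_lt2. Qed.

Definition chain D (c j : nat) := cmem D (2 * j + c).

Lemma chain_periodic p D c : N %| 2 * p -> forall j, chain D c (j + p) = chain D c j.
Proof.
move=> /dvdnP [q eq_p] j.
by rewrite /chain mulnDr eq_p addnAC (periodic_addMn (cmem_periodic D)).
Qed.

Lemma chain_cover D c : total_dom D -> forall j, chain D c j || chain D c j.+1.
Proof.
move/total_domP=> cover j.
by rewrite /chain (_ : 2 * j.+1 + c = (2 * j + c).+2) //; lia.
Qed.

Lemma chain_rot s D c j : chain (crot (2 * s) D) c j = chain D c (j + s).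
Proof. by rewrite /chain cmem_rot; congr cmem; lia. Qed.

Lemma cmem_chain D k : cmem D k = chain D (k %% 2) (k %/ 2).
Proof. by rewrite /chain mulnC -divn_eq. Qed.

Lemma chain_inj D E : (forall c, c < 2 -> forall j, chain D c j = chain E c j) -> D = E.
Proof.
move=> eq_chains; apply: cmem_inj => k; rewrite !cmem_chain.
by apply: eq_chains; rewrite ltn_pmod.
Qed.

End CycleSets.

Section OddCycle.
Variable n : nat.
Local Notation N := n.+1.
Hypotheses (N_odd : odd N) (n_ge2 : 2 <= n).
Implicit Types D E : {set 'I_N}.

Let chain0_periodic D : forall j, chain D 0 (j + N) = chain D 0 j.
Proof. by apply: chain_periodic; rewrite dvdn_mull. Qed.

Let N_mod2 : N %% 2 = 1.
Proof. by rewrite modn2 N_odd. Qed.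

Let half_succ : 2 * (N.+1 %/ 2) = N.+1.
Proof. lia. Qed.

Lemma card_chain_odd D : #|D| = \sum_(j < N) (chain D 0 j : nat).
Proof.
(* Count 2N consecutive positions twice; the odd positions 2j + 1 are the even
   positions 2(j + (N+1)/2) shifted by N. *)
have double_card : #|D| + #|D| = \sum_(k < 2 * N) (cmem D k : nat).
  rewrite mul2n -addnn big_split_ord /= card_cmem; congr (_ + _).
  by apply: eq_bigr => k _; rewrite addnC cmem_periodic.
have odd_terms : \sum_(j < N) (cmem D (2 * j + 1) : nat) = \sum_(j < N) (chain D 0 j : nat).
  rewrite -(sum_periodic_shift (chain0_periodic D) (N.+1 %/ 2)).
  apply: eq_bigr => j _; rewrite /chain mulnDr half_succ addn0.
  by rewrite (_ : 2 * j + N.+1 = 2 * j + 1 + N) ?cmem_periodic //; lia.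
have even_terms : \sum_(j < N) (cmem D (2 * j) : nat) = \sum_(j < N) (chain D 0 j : nat).
  by apply: eq_bigr => j _; rewrite /chain addn0.
move: double_card; rewrite (sum_ord_even_odd N (fun k => cmem D k : nat)).
by rewrite even_terms odd_terms; lia.
Qed.

Lemma cmem_chain_odd D x : cmem D x = chain D 0 (x * (N.+1 %/ 2)).
Proof. by rewrite /chain addn0 mulnCA half_succ mulnS (periodic_addMn (cmem_periodic D)). Qed.

Lemma total_dom_card_odd D : total_dom D -> N.+1 %/ 2 <= #|D|.
Proof.
move=> tds; rewrite card_chain_odd.
by have := covering_count (chain0_periodic D) (chain_cover 0 tds); lia.
Qed.

Lemma gamma_t_set_oddE D : gamma_t_set D = total_dom D && (#|D| == N.+1 %/ 2).
Proof.
apply: (gamma_t_setE (total_dom_set1100 n_ge2)) => //; last exact: total_dom_card_odd.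
by rewrite card_set1100; lia.
Qed.

Lemma gamma_odd_one_double D : gamma_t_set D ->
  \sum_(j < N) (chain D 0 j && chain D 0 j.+1 : nat) = 1.
Proof.
rewrite gamma_t_set_oddE => /andP [tds /eqP card_D].
have := covering_count (chain0_periodic D) (chain_cover 0 tds).
by rewrite -card_chain_odd card_D; lia.
Qed.

Let phase D := double_phase N (chain D 0).

Lemma gamma_odd_shape D y : gamma_t_set D -> chain D 0 y = ~~ odd ((y + phase D) %% N).
Proof.
move=> gD; have [tds _] := andP gD.
exact: (single_double_shape (chain0_periodic D) (chain_cover 0 tds) (gamma_odd_one_double gD)).
Qed.

Lemma gamma_odd_phase_inj D E : gamma_t_set D -> gamma_t_set E -> phase D = phase E -> D = E.
Proof.
move=> gD gE eq_phase; apply: cmem_inj => k.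
by rewrite !cmem_chain_odd !gamma_odd_shape // eq_phase.
Qed.

Lemma gamma_odd_phase_lt D : gamma_t_set D -> phase D < N.
Proof. by move=> gD; apply: double_phase_lt; apply: gamma_odd_one_double. Qed.

Lemma gamma_set1100_odd : gamma_t_set (set1100 n).
Proof. by rewrite gamma_t_set_oddE total_dom_set1100 // card_set1100; apply/eqP; lia. Qed.

Lemma card_gamma_odd_lb : N <= #|[set D : {set 'I_N} | gamma_t_set D]|.
Proof.
have rot_inj : injective (fun b : 'I_N => crot (2 * b) (set1100 n)).
  move=> a b /= eq_rot; apply: val_inj.
  apply: (double_shift_inj (chain0_periodic _) (gamma_odd_one_double gamma_set1100_odd))
    => [||j]; rewrite ?ltn_ord //.
  by rewrite -!chain_rot eq_rot.
rewrite -{1}(card_ord N) -(card_imset _ rot_inj); apply: subset_leq_card.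
by apply/subsetP => D /imsetP [b _ ->]; rewrite inE gamma_t_set_rot // gamma_set1100_odd.
Qed.

Lemma card_containing_odd_ub (v : 'I_N) :
  #|[set D in [set D : {set 'I_N} | gamma_t_set D] | v \in D]| <= N.+1 %/ 2.
Proof.
set pos := fun D => (inord ((v * (N.+1 %/ 2) + phase D) %% N) : 'I_N).
have pos_inj : {in [set D in [set D : {set 'I_N} | gamma_t_set D] | v \in D] &, injective pos}.
  move=> D E; rewrite !inE => /andP [gD _] /andP [gE _] /(congr1 val).
  rewrite /= !inordK ?ltn_pmod // => /eqP.
  rewrite eqn_modDl !modn_small ?gamma_odd_phase_lt // => /eqP.
  exact: gamma_odd_phase_inj.
rewrite -(card_in_imset pos_inj) -card_ord_not_odd; apply: subset_leq_card.
apply/subsetP => _ /imsetP [D /setIdP [gD vD] ->]; rewrite inE in gD.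
by rewrite inE inordK ?ltn_pmod // -gamma_odd_shape // -cmem_chain_odd cmem_ord.
Qed.

Lemma TDV_odd (v : 'I_N) : TDV v = N.+1 %/ 2.
Proof.
rewrite TDVE; apply: (card_containing_eq (c := N.+1 %/ 2)) => //.
- by move=> D; rewrite inE gamma_t_set_oddE => /andP [_ /eqP].
- exact: card_containing_odd_ub.
- by rewrite card_ord leq_mul2r card_gamma_odd_lb orbT.
Qed.

End OddCycle.

Section EvenCycle.
Variables n m : nat.
Local Notation N := n.+1.
Hypotheses (N_eq : N = 2 * m) (n_ge2 : 2 <= n).
Implicit Types D E : {set 'I_N}.

Let m_gt0 : 0 < m.
Proof. lia. Qed.

Let chain_periodic_half D c : forall j, chain D c (j + m) = chain D c j.
Proof. by apply: chain_periodic; rewrite N_eq. Qed.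

Lemma card_chain_even D :
  #|D| = \sum_(j < m) (chain D 0 j : nat) + \sum_(j < m) (chain D 1 j : nat).
Proof.
rewrite card_cmem N_eq (sum_ord_even_odd m (fun k => cmem D k : nat)).
by congr (_ + _); apply: eq_bigr => j _; rewrite /chain addn0.
Qed.

Lemma chain_count_even D c : total_dom D ->
  (\sum_(j < m) (chain D c j : nat)) * 2 =
    m + \sum_(j < m) (chain D c j && chain D c j.+1 : nat).
Proof. by move=> tds; apply: covering_count (chain_periodic_half D c) (chain_cover c tds). Qed.

Lemma total_dom_card_even D : total_dom D -> 2 * (m.+1 %/ 2) <= #|D|.
Proof.
move=> tds; rewrite card_chain_even.
by have := chain_count_even 0 tds; have := chain_count_even 1 tds; lia.
Qed.

Lemma gamma_t_set_evenE D : gamma_t_set D = total_dom D && (#|D| == 2 * (m.+1 %/ 2)).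
Proof.
apply: (gamma_t_setE (total_dom_set1100 n_ge2)) => //; last exact: total_dom_card_even.
by rewrite card_set1100 N_eq; lia.
Qed.

Lemma gamma_set1100_even : gamma_t_set (set1100 n).
Proof. by rewrite gamma_t_set_evenE total_dom_set1100 // card_set1100 N_eq; apply/eqP; lia. Qed.

Lemma gamma_even_chain D c : gamma_t_set D -> c < 2 ->
  \sum_(j < m) (chain D c j : nat) = m.+1 %/ 2 /\
  \sum_(j < m) (chain D c j && chain D c j.+1 : nat) = 2 * (m.+1 %/ 2) - m.
Proof.
rewrite gamma_t_set_evenE card_chain_even => /andP [tds /eqP card_D].
have := chain_count_even 0 tds; have := chain_count_even 1 tds.
by case: c => [|[|]] //; lia.
Qed.

Lemma chain_interleave0 D E j : chain (interleave D E) 0 j = chain D 0 j.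
Proof. by rewrite /chain cmem_interleave ?N_eq ?oddM // oddD oddM. Qed.

Lemma chain_interleave1 D E j : chain (interleave D E) 1 j = chain E 1 j.
Proof. by rewrite /chain cmem_interleave ?N_eq ?oddM // oddD oddM. Qed.

Lemma gamma_t_set_interleave D E : gamma_t_set D -> gamma_t_set E ->
  gamma_t_set (interleave D E).
Proof.
move=> gD gE; have [tdsD _] := andP gD; have [tdsE _] := andP gE.
rewrite gamma_t_set_evenE total_dom_interleave ?N_eq ?oddM //= card_chain_even.
under eq_bigr do rewrite chain_interleave0.
under [X in _ + X]eq_bigr do rewrite chain_interleave1.
have [-> _] := gamma_even_chain gD (isT : 0 < 2).
by have [-> _] := gamma_even_chain gE (isT : 1 < 2); rewrite addnn mul2n.
Qed.

Lemma card_gamma_even_lb k :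
  (forall c, c < 2 -> forall a b : 'I_k,
     (forall j, chain (set1100 n) c (j + a) = chain (set1100 n) c (j + b)) -> a = b) ->
  k * k <= #|[set D : {set 'I_N} | gamma_t_set D]|.
Proof.
move=> shift_inj.
pose F (p : 'I_k * 'I_k) := interleave (crot (2 * p.1) (set1100 n)) (crot (2 * p.2) (set1100 n)).
have F_inj : injective F.
  move=> [a b] [a' b'] /= eq_F; congr pair.
    apply: (shift_inj 0) => // j.
    by have := congr1 (fun D => chain D 0 j) eq_F; rewrite /F /= !chain_interleave0 !chain_rot.
  apply: (shift_inj 1) => // j.
  by have := congr1 (fun D => chain D 1 j) eq_F; rewrite /F /= !chain_interleave1 !chain_rot.
have := card_imset [set: 'I_k * 'I_k] F_inj.
rewrite cardsT card_prod card_ord => <-; apply: subset_leq_card.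
apply/subsetP => _ /imsetP [p _ ->]; rewrite inE.
by apply: gamma_t_set_interleave; apply: gamma_t_set_rot; apply: gamma_set1100_even.
Qed.

Section Mod4Zero.
Hypothesis m_even : ~~ odd m.

Let half_m : 2 * (m.+1 %/ 2) = m.
Proof. by have := modn2 m; rewrite (negbTE m_even); lia. Qed.

Lemma gamma_mod4_0_alternate D c : gamma_t_set D -> c < 2 ->
  forall j, chain D c j = chain D c 0 (+) odd j.
Proof.
move=> gD c_lt2; have [tds _] := andP gD.
apply: (covering_alternate (chain_periodic_half D c) (chain_cover c tds) m_gt0).
by have [_ ->] := gamma_even_chain gD c_lt2; rewrite half_m subnn.
Qed.

Lemma gamma_mod4_0_inj D E : gamma_t_set D -> gamma_t_set E ->
  (forall c, c < 2 -> chain D c 0 = chain E c 0) -> D = E.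
Proof.
move=> gD gE eq_start; apply: chain_inj => c c_lt2 j.
by rewrite (gamma_mod4_0_alternate gD) // (gamma_mod4_0_alternate gE) // eq_start.
Qed.

Lemma card_containing_mod4_0_ub (v : 'I_N) :
  #|[set D in [set D : {set 'I_N} | gamma_t_set D] | v \in D]| <= 2.
Proof.
set c := v %% 2; have c_lt2 : c < 2 by rewrite ltn_pmod.
have chain_v D : gamma_t_set D -> v \in D -> chain D c 0 = ~~ odd (v %/ 2).
  move=> gD; rewrite -cmem_ord cmem_chain -/c gamma_mod4_0_alternate //.
  by case: (chain D c 0); case: (odd _).
have other_inj : {in [set D in [set D : {set 'I_N} | gamma_t_set D] | v \in D] &,
                  injective (fun D => chain D (1 - c) 0)}.
  move=> D E; rewrite !inE => /andP [gD vD] /andP [gE vE] eq_other.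
  apply: gamma_mod4_0_inj => // c' c'_lt2.
  have [->|ne_c] := eqVneq c' c; first by rewrite !chain_v.
  by rewrite (_ : c' = 1 - c) //; lia.
by rewrite -card_bool; apply: leq_card_in other_inj.
Qed.

Lemma TDV_mod4_0 (v : 'I_N) : TDV v = 2.
Proof.
rewrite TDVE; apply: (card_containing_eq (c := m)).
- by move=> D; rewrite inE gamma_t_set_evenE half_m => /andP [_ /eqP].
- exact: card_containing_mod4_0_ub.
rewrite card_ord (_ : N * 2 = 2 * 2 * m) ?leq_mul2r; last lia.
apply/orP; right; apply: card_gamma_even_lb => c c_lt2 a b /(_ 0).
rewrite !add0n (gamma_mod4_0_alternate gamma_set1100_even c_lt2 a).
rewrite (gamma_mod4_0_alternate gamma_set1100_even c_lt2 b) => /addbI.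
by case: a b => [[|[|]] //= ?] [[|[|]] //= ?] _; apply: val_inj.
Qed.

End Mod4Zero.

Section Mod4Two.
Hypothesis m_odd : odd m.

Let half_m : 2 * (m.+1 %/ 2) = m.+1.
Proof. by have := modn2 m; rewrite m_odd; lia. Qed.

Lemma gamma_mod4_2_one_double D c : gamma_t_set D -> c < 2 ->
  \sum_(j < m) (chain D c j && chain D c j.+1 : nat) = 1.
Proof. by move=> gD c_lt2; have [_ ->] := gamma_even_chain gD c_lt2; rewrite half_m subSnn. Qed.

Let phase D c := double_phase m (chain D c).

Lemma gamma_mod4_2_shape D c y : gamma_t_set D -> c < 2 ->
  chain D c y = ~~ odd ((y + phase D c) %% m).
Proof.
move=> gD c_lt2; have [tds _] := andP gD.
exact: (single_double_shape (chain_periodic_half D c) (chain_cover c tds)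
         (gamma_mod4_2_one_double gD c_lt2)).
Qed.

Lemma gamma_mod4_2_phase_inj D E : gamma_t_set D -> gamma_t_set E ->
  (forall c, c < 2 -> phase D c = phase E c) -> D = E.
Proof.
move=> gD gE eq_phase; apply: chain_inj => c c_lt2 j.
by rewrite !gamma_mod4_2_shape // eq_phase.
Qed.

Let ord_mod k : 'I_m := Ordinal (ltn_pmod k m_gt0).

Lemma card_containing_mod4_2_ub (v : 'I_N) :
  #|[set D in [set D : {set 'I_N} | gamma_t_set D] | v \in D]| <= m.+1 %/ 2 * m.
Proof.
set c := v %% 2; have c_lt2 : c < 2 by rewrite ltn_pmod.
have other_lt2 : 1 - c < 2 by lia.
have phase_lt D c' : gamma_t_set D -> c' < 2 -> phase D c' < m.
  by move=> gD c'_lt2; apply: double_phase_lt; apply: gamma_mod4_2_one_double.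
pose f D := (ord_mod (v %/ 2 + phase D c), ord_mod (phase D (1 - c))).
have f_inj : {in [set D in [set D : {set 'I_N} | gamma_t_set D] | v \in D] &, injective f}.
  move=> D E; rewrite !inE => /andP [gD _] /andP [gE _] [/eqP eq_c eq_other].
  rewrite eqn_modDl !modn_small ?phase_lt // in eq_c.
  rewrite !modn_small ?phase_lt // in eq_other.
  apply: gamma_mod4_2_phase_inj => // c' c'_lt2.
  have [->|ne_c] := eqVneq c' c; first exact/eqP.
  by rewrite (_ : c' = 1 - c) //; lia.
rewrite -(card_in_imset f_inj) -card_ord_not_odd -[m in _ * m]card_ord -cardsT -cardsX.
apply: subset_leq_card; apply/subsetP => _ /imsetP [D /setIdP [gD vD] ->].
rewrite inE in gD; rewrite !inE andbT /= -gamma_mod4_2_shape //.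
by move: vD; rewrite -cmem_ord cmem_chain.
Qed.

Lemma TDV_mod4_2 (v : 'I_N) : TDV v = m.+1 %/ 2 * m.
Proof.
rewrite TDVE; apply: (card_containing_eq (c := m.+1)).
- by move=> D; rewrite inE gamma_t_set_evenE half_m => /andP [_ /eqP].
- exact: card_containing_mod4_2_ub.
rewrite card_ord (_ : N * (m.+1 %/ 2 * m) = m * m * m.+1) ?leq_mul2r; last first.
  by move: half_m; set k := m.+1 %/ 2 => <-; rewrite N_eq; nia.
apply/orP; right; apply: card_gamma_even_lb => c c_lt2 a b shift_eq; apply: val_inj.
exact: (double_shift_inj (chain_periodic_half _ c)
         (gamma_mod4_2_one_double gamma_set1100_even c_lt2) (ltn_ord a) (ltn_ord b) shift_eq).
Qed.

End Mod4Two.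
End EvenCycle.

Theorem corollary4p2 (n : nat) (v : 'I_n) : 3 <= n ->
  TDV v = (if n %% 4 == 0 then 2
           else if n %% 4 == 2 then (n %/ 2) * ((n + 2) %/ 4)
           else n %/ 2 + 1).
Proof.
case: n v => [|n] v // n_ge3; have n_ge2 : 2 <= n by lia.
have [N_odd | N_even] := boolP (odd n.+1).
  rewrite TDV_odd //; have := modn2 n.+1; rewrite N_odd => N_mod2.
  by do 2![case: ifP => /eqP ?; first lia]; lia.
have N_eq : n.+1 = 2 * (n.+1 %/ 2) by have := modn2 n.+1; rewrite (negbTE N_even); lia.
have [m_odd | m_even] := boolP (odd (n.+1 %/ 2)).
  rewrite (TDV_mod4_2 N_eq) //; have := modn2 (n.+1 %/ 2); rewrite m_odd => m_mod2.
  case: ifP => /eqP ?; first lia.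
  by case: ifP => /eqP ?; [rewrite mulnC; congr (_ * _) | ]; lia.
rewrite (TDV_mod4_0 N_eq) //; have := modn2 (n.+1 %/ 2); rewrite (negbTE m_even) => m_mod2.
by case: ifP => /eqP ? //; lia.
Qed.
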